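(* Let $f\in\mathcal H_{(d)}$ and nonzero $x,y\in\mathbb C^{n+1}$ with $\operatorname{rank}Df(x)|_{x^\perp}=n$. Then \[\|(Df(x)|_{x^\perp})^{-1}Df(x)|_{y^\perp}\|\le 1+d_P(x,y)\tan\theta_x.\]
   Context: $\mathcal H_{(d)}$: systems $f=(f_1,\dots,f_n)$ of homogeneous complex polynomials in $n+1$ variables. $x^\perp$ is the Hermitian orthogonal complement of $x$; $Df(x)|_{V}$ denotes the restriction of $Df(x):\mathbb C^{n+1}\to\mathbb C^n$ to a subspace $V$; norms are operator norms. $d_P(x,y)=\sin d_R(x,y)$ where $\cos d_R(x,y)=|\langle x,y\rangle|/(\|x\|\|y\|)$, $d_R\in[0,\pi/2]$. When $\operatorname{rank}Df(x)=n$, $\theta_x$ is the angle between the complex lines $\mathbb Cx$ and $\ker Df(x)$ (the angle $\theta\in[0,\pi/2]$ with $\cos\theta=|\langle x,w\rangle|/(\|x\|\|w\|)$ for $0\ne w\in\ker Df(x)$). *)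

(* The complex numbers are taken to be an arbitrary
   numClosedFieldType C (algebraically closed field with conjugation and
   norm; e.g. algC, or the complex numbers). *)
From HB Require Import structures.
From mathcomp Require Import all_boot all_order all_algebra.
Set Implicit Arguments. Unset Strict Implicit. Unset Printing Implicit Defensive.
Import Order.TTheory GRing.Theory Num.Theory.
Local Open Scope ring_scope.

Definition hdot (C : numClosedFieldType) (m : nat) (u v : 'rV[C]_m) : C :=
  \sum_(k < m) u 0 k * (v 0 k)^*.

Definition vnorm (C : numClosedFieldType) (m : nat) (u : 'rV[C]_m) : C :=
  sqrtC (\sum_(k < m) `|u 0 k| ^+ 2).

(* cos d_R(x,y) = |<x,y>| / (||x|| ||y||) *)
Definition cosR (C : numClosedFieldType) (m : nat) (x y : 'rV[C]_m) : C :=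
  `|hdot x y| / (vnorm x * vnorm y).

Definition sin_of_cos (C : numClosedFieldType) (c : C) : C := sqrtC (1 - c ^+ 2).

(* Projective distance d_P(x,y) = sin d_R(x,y). *)
Definition dP (C : numClosedFieldType) (m : nat) (x y : 'rV[C]_m) : C :=
  sin_of_cos (cosR x y).

(* The orthogonal complement x^perp as the row space of a square matrix:
   x^perp = { v | <v,x> = 0 } = { v | v *m (conj x)^T = 0 }. *)
Definition perp (C : numClosedFieldType) (m : nat) (x : 'rV[C]_m) : 'M[C]_m :=
  kermx (map_mx Num.conj x)^T.

(* Exponent vectors of monomials of degree d in m variables. *)
Definition expo (m d : nat) := {ffun 'I_m -> 'I_d.+1}.
Definition homog_expo (m d : nat) (a : expo m d) : bool :=
  (\sum_(k < m) (a k : nat) == d)%N.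

(* A system f = (f_1..f_n) in H_(d): f_i is homogeneous of degree d i in
   n+1 variables, given by its coefficients c i a on the monomials x^a,
   |a| = d i (coefficients on other exponent vectors are ignored). *)
Definition hsys (C : numClosedFieldType) (n : nat) (d : 'I_n -> nat) :=
  forall i : 'I_n, expo n.+1 (d i) -> C.

Definition hsys_eval (C : numClosedFieldType) (n : nat) (d : 'I_n -> nat)
  (f : hsys C d) (x : 'rV[C]_n.+1) : 'rV[C]_n :=
  \row_(i < n) \sum_(a : expo n.+1 (d i) | homog_expo a)
     f i a * \prod_(l < n.+1) x 0 l ^+ (a l : nat).

(* The derivative Df(x) : C^(n+1) -> C^n, as a matrix acting on row vectors
   (v |-> v *m Df x); entry (k,i) = partial f_i / partial x_k (x). *)
Definition Dsys (C : numClosedFieldType) (n : nat) (d : 'I_n -> nat)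
  (f : hsys C d) (x : 'rV[C]_n.+1) : 'M[C]_(n.+1, n) :=
  \matrix_(k < n.+1, i < n)
    \sum_(a : expo n.+1 (d i) | homog_expo a)
      f i a * (a k : nat)%:R *
      \prod_(l < n.+1) x 0 l ^+ ((a l : nat) - (l == k))%N.

From HB Require Import structures.
From mathcomp Require Import all_boot all_order all_algebra.
From mathcomp Require Import ring.
Import Order.TTheory GRing.Theory Num.Theory.
Set Implicit Arguments. Unset Strict Implicit. Unset Printing Implicit Defensive.
Local Open Scope ring_scope.

(* Write A := Df(x) and let w span ker A.  Since A restricted to
   x^perp has rank n, ker A is the line C w, so u A = v A forces
   u = v + lam w, and <u,x> = 0 determines lam = -<v,x>/<w,x>.
   Taking components orthogonal to x (a linear operation fixing u) gives
     u = (v)_x^perp + lam (w)_x^perp,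
   where ||(v)_x^perp|| <= ||v|| and ||(w)_x^perp|| = ||w|| sin theta_x.
   Finally <v,y> = 0 gives <v,x> = <v,(x)_y^perp>, hence by Cauchy-Schwarz
   |<v,x>| <= ||v|| ||x|| d_P(x,y).  Combining,
     cos theta_x ||u|| <= (cos theta_x + d_P(x,y) sin theta_x) ||v||. *)

Section HermitianGeometry.
Variables (C : numClosedFieldType) (m : nat).
Implicit Types (u v p q z : 'rV[C]_m) (a : C).

Lemma hdotDl u v z : hdot (u + v) z = hdot u z + hdot v z.
Proof. by rewrite /hdot -big_split; apply: eq_bigr => k _; rewrite mxE mulrDl. Qed.

Lemma hdotZl a u z : hdot (a *: u) z = a * hdot u z.
Proof. by rewrite /hdot mulr_sumr; apply: eq_bigr => k _; rewrite mxE mulrA. Qed.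

Lemma hdotC u v : hdot v u = (hdot u v)^*.
Proof.
rewrite /hdot rmorph_sum; apply: eq_bigr => k _.
by rewrite rmorphM /= conjCK mulrC.
Qed.

Lemma hdotDr u v z : hdot z (u + v) = hdot z u + hdot z v.
Proof. by rewrite hdotC hdotDl rmorphD /= -!hdotC. Qed.

Lemma hdotZr a u z : hdot z (a *: u) = a^* * hdot z u.
Proof. by rewrite hdotC hdotZl rmorphM /= -!hdotC. Qed.

Lemma hdot0r z : hdot z 0 = 0.
Proof. by rewrite -(scale0r 0) hdotZr rmorph0 mul0r. Qed.

Lemma hdot_ge0 u : 0 <= hdot u u.
Proof. by apply: sumr_ge0 => k _; rewrite -normCK exprn_ge0. Qed.

Lemma hdot_eq0 u : hdot u u = 0 -> u = 0.
Proof.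
rewrite /hdot => /psumr_eq0P uu0; apply/rowP => k; rewrite mxE.
have terms_ge0 (i : 'I_m) : true -> 0 <= u 0 i * (u 0 i)^*.
  by rewrite -normCK exprn_ge0.
have /eqP := uu0 terms_ge0 k isT.
by rewrite -normCK expf_eq0 /= normr_eq0 => /eqP.
Qed.

Lemma vnormE u : vnorm u = sqrtC (hdot u u).
Proof. by rewrite /vnorm /hdot; congr sqrtC; apply: eq_bigr => k _; rewrite normCK. Qed.

Lemma vnorm_sq u : vnorm u ^+ 2 = hdot u u.
Proof. by rewrite vnormE sqrtCK. Qed.

Lemma vnorm_ge0 u : 0 <= vnorm u.
Proof. by rewrite vnormE sqrtC_ge0 hdot_ge0. Qed.

Lemma vnorm_gt0 u : u != 0 -> 0 < vnorm u.
Proof.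
move=> u0; rewrite lt_def vnorm_ge0 andbT; apply/eqP => nu0.
by move/eqP: u0; apply; apply: hdot_eq0; rewrite -vnorm_sq nu0 expr0n.
Qed.

Lemma vnorm_from_sq u r : 0 <= r -> r ^+ 2 = hdot u u -> vnorm u = r.
Proof. by move=> r0 e; rewrite vnormE -e sqrCK. Qed.

Lemma vnormZ a u : vnorm (a *: u) = `|a| * vnorm u.
Proof.
apply: vnorm_from_sq; first by rewrite mulr_ge0 ?vnorm_ge0.
by rewrite hdotZl hdotZr exprMn vnorm_sq normCK mulrA.
Qed.

Definition orth_part p q : 'rV[C]_m := p - (hdot p q / hdot q q) *: q.

Lemma orth_partDl p p' q : orth_part (p + p') q = orth_part p q + orth_part p' q.
Proof. by rewrite /orth_part hdotDl mulrDl scalerDl opprD addrACA. Qed.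

Lemma orth_partZl a p q : orth_part (a *: p) q = a *: orth_part p q.
Proof. by rewrite /orth_part hdotZl scalerBr scalerA mulrA. Qed.

Lemma orth_part_id p q : hdot p q = 0 -> orth_part p q = p.
Proof. by move=> pq; rewrite /orth_part pq mul0r scale0r subr0. Qed.

Lemma hdot_orth_part p q z : hdot p q = 0 -> hdot p (orth_part z q) = hdot p z.
Proof. by move=> pq; rewrite /orth_part -scaleNr hdotDr hdotZr pq mulr0 addr0. Qed.

Lemma hdot_orth_part_sq p q : q != 0 ->
  hdot (orth_part p q) (orth_part p q) = hdot p p - `|hdot p q| ^+ 2 / hdot q q.
Proof.
move=> q0; have qq0 : hdot q q != 0 by apply/eqP => /hdot_eq0; apply/eqP.
rewrite /orth_part -scaleNr !(hdotDl, hdotDr, hdotZl, hdotZr) [hdot q p]hdotC.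
rewrite normCK rmorphN /= fmorph_div /= (geC0_conj (hdot_ge0 q)).
by field.
Qed.

Lemma vnorm_orth_part_le p q : q != 0 -> vnorm (orth_part p q) <= vnorm p.
Proof.
move=> q0; rewrite -(ler_pXn2r (_ : 0 < 2)%N) ?nnegrE ?vnorm_ge0 //.
rewrite !vnorm_sq hdot_orth_part_sq // lerBlDr lerDl.
by rewrite divr_ge0 ?exprn_ge0 ?hdot_ge0.
Qed.

(* Cauchy-Schwarz, from the nonnegativity of the Pythagoras identity. *)
Lemma cauchy_schwarz p q : `|hdot p q| <= vnorm p * vnorm q.
Proof.
have [->|q0] := eqVneq q 0; first by rewrite hdot0r normr0 mulr_ge0 ?vnorm_ge0.
have qq_gt0 : 0 < hdot q q by rewrite -vnorm_sq exprn_gt0 ?vnorm_gt0.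
rewrite -(ler_pXn2r (_ : 0 < 2)%N) ?nnegrE ?mulr_ge0 ?vnorm_ge0 //.
have := hdot_ge0 (orth_part p q).
by rewrite hdot_orth_part_sq // subr_ge0 ler_pdivrMr // exprMn !vnorm_sq.
Qed.

Lemma vnormD p q : vnorm (p + q) <= vnorm p + vnorm q.
Proof.
rewrite -(ler_pXn2r (_ : 0 < 2)%N) ?nnegrE ?addr_ge0 ?vnorm_ge0 //.
rewrite vnorm_sq !(hdotDl, hdotDr) sqrrD !vnorm_sq [hdot q p]hdotC.
have re_le : 'Re (hdot p q) <= vnorm p * vnorm q.
  exact: le_trans (leif_Re_Creal _).1 (cauchy_schwarz p q).
rewrite ReE ler_pdivrMr ?ltr0n // mulrC in re_le.
set g := hdot p q in re_le *; set N := vnorm p * vnorm q.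
have -> : hdot p p + g + (g^* + hdot q q) = hdot p p + hdot q q + (g + g^*) by ring.
have -> : hdot p p + N *+ 2 + hdot q q = hdot p p + hdot q q + 2 * N by ring.
by rewrite lerD2l.
Qed.

(* The cosine of the angle between two lines is symmetric and lies in
   [0, 1], so the corresponding sine is a genuine nonnegative square root. *)
Lemma cosR_sym p q : cosR p q = cosR q p.
Proof. by rewrite /cosR [hdot q p]hdotC norm_conjC [vnorm q * _]mulrC. Qed.

Lemma cosR_ge0 p q : 0 <= cosR p q.
Proof. by rewrite /cosR divr_ge0 ?mulr_ge0 ?vnorm_ge0. Qed.

Lemma cosR_le1 p q : p != 0 -> q != 0 -> cosR p q <= 1.
Proof.
move=> p0 q0; rewrite /cosR ler_pdivrMr ?mul1r ?cauchy_schwarz //.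
by rewrite mulr_gt0 ?vnorm_gt0.
Qed.

Lemma sin_of_cos_cosR_ge0 p q : p != 0 -> q != 0 -> 0 <= sin_of_cos (cosR p q).
Proof.
move=> p0 q0; rewrite /sin_of_cos sqrtC_ge0 subr_ge0.
by rewrite expr_le1 ?cosR_ge0 ?cosR_le1.
Qed.

Lemma vnorm_orth_part p q : p != 0 -> q != 0 ->
  vnorm (orth_part p q) = vnorm p * sin_of_cos (cosR p q).
Proof.
move=> p0 q0; apply: vnorm_from_sq.
  by rewrite mulr_ge0 ?vnorm_ge0 ?sin_of_cos_cosR_ge0.
have np0 : vnorm p != 0 by rewrite gt_eqF ?vnorm_gt0.
have nq0 : vnorm q != 0 by rewrite gt_eqF ?vnorm_gt0.
have sin_sq : sin_of_cos (cosR p q) ^+ 2 = 1 - cosR p q ^+ 2 by apply: sqrtCK.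
rewrite hdot_orth_part_sq // exprMn sin_sq /cosR -!vnorm_sq.
by field; rewrite np0 nq0.
Qed.

End HermitianGeometry.

Lemma kernel_line (F : fieldType) (n : nat) (P : 'M[F]_n.+1) (A : 'M[F]_(n.+1, n))
    (w z : 'rV[F]_n.+1) :
  \rank (P *m A) = n -> w != 0 -> w *m A = 0 -> z *m A = 0 ->
  exists a, z = a *: w.
Proof.
move=> rkPA w0 wA zA.
have rkA : \rank A = n.
  by apply/eqP; rewrite eqn_leq rank_leq_col /= -{1}rkPA mxrankM_maxr.
have rk_ker : \rank (kermx A) = 1%N by rewrite mxrank_ker rkA subSnn.
have w_ker : (w <= kermx A)%MS by apply/sub_kermxP.
have ker_w : (kermx A <= w)%MS.
  by rewrite -(mxrank_leqif_sup w_ker).2 rk_ker rank_rV w0.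
by apply/sub_rVP; apply: submx_trans ker_w; apply/sub_kermxP.
Qed.

Section CoreInequality.
Variables (C : numClosedFieldType) (m : nat) (x y w v : 'rV[C]_m) (lam : C).
Hypotheses (x0 : x != 0) (y0 : y != 0) (w0 : w != 0) (vy : hdot v y = 0).

Lemma hdot_perp_bound : `|hdot v x| <= vnorm v * (vnorm x * dP x y).
Proof.
by rewrite -(hdot_orth_part x vy) /dP -vnorm_orth_part // cauchy_schwarz.
Qed.

Hypothesis ux : hdot (v + lam *: w) x = 0.

Lemma correction_norm : `|lam| * `|hdot w x| = `|hdot v x|.
Proof.
move: ux; rewrite hdotDl hdotZl => /eqP; rewrite addr_eq0 => /eqP ->.
by rewrite normrN normrM.
Qed.

(* Core inequality: correcting v in y^perp along w into x^perp costs at most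
   a factor 1 + d_P(x, y) tan theta, with cos theta = cosR x w. *)
Lemma correction_bound :
  cosR x w * vnorm (v + lam *: w) <=
  (cosR x w + dP x y * sin_of_cos (cosR x w)) * vnorm v.
Proof.
set c := cosR x w; set s := sin_of_cos c.
set X := vnorm x; set W := vnorm w; set V := vnorm v.
have X0 : X != 0 by rewrite gt_eqF ?vnorm_gt0.
have W0 : W != 0 by rewrite gt_eqF ?vnorm_gt0.
have c_ge0 : 0 <= c by apply: cosR_ge0.
have s_ge0 : 0 <= s by apply: sin_of_cos_cosR_ge0.
have cE : c = `|hdot w x| / (X * W).
  by rewrite /c /cosR [hdot x w]hdotC norm_conjC.
have split_u : v + lam *: w = orth_part v x + lam *: orth_part w x.
  by rewrite -orth_partZl -orth_partDl orth_part_id.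
have norm_u : vnorm (v + lam *: w) <= V + `|lam| * (W * s).
  rewrite split_u; apply: le_trans (vnormD _ _) _.
  rewrite vnormZ [vnorm (orth_part w _)]vnorm_orth_part // cosR_sym -/c -/s lerD2r.
  exact: vnorm_orth_part_le.
apply: le_trans (ler_wpM2l c_ge0 norm_u) _.
have -> : c * (V + `|lam| * (W * s)) = c * V + `|hdot v x| * s / X.
  by rewrite -correction_norm cE; field; rewrite X0 W0.
have -> : (c + dP x y * s) * V = c * V + V * (X * dP x y) * s / X.
  by field.
rewrite lerD2l ler_wpM2r ?invr_ge0 ?vnorm_ge0 // ler_wpM2r //.
exact: hdot_perp_bound.
Qed.

End CoreInequality.

Theorem lemma4 (C : numClosedFieldType) (n : nat) (d : 'I_n -> nat)
  (f : hsys C d) (x y : 'rV[C]_n.+1) :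
  x != 0 -> y != 0 ->
  \rank (perp x *m Dsys f x) = n ->
  forall w : 'rV[C]_n.+1, w != 0 -> w *m Dsys f x = 0 ->
  let costh := cosR x w in
  forall v u : 'rV[C]_n.+1,
    hdot v y = 0 -> hdot u x = 0 -> u *m Dsys f x = v *m Dsys f x ->
    costh * vnorm u <= (costh + dP x y * sin_of_cos costh) * vnorm v.
Proof.
move=> x0 y0 rk w w0 wA costh v u vy ux uvA.
have [lam uv_w] : exists lam, u - v = lam *: w.
  by apply: kernel_line rk w0 wA _; rewrite mulmxBl uvA subrr.
have u_eq : u = v + lam *: w by rewrite -uv_w addrC subrK.
by rewrite /costh u_eq; apply: correction_bound => //; rewrite -u_eq.
Qed.
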